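(* Let $d=1$, $I=[-\tfrac12,\tfrac12]$, $f=g=1_I$, $\overline h=2\cdot1_{I^2}$ and $c(x,y)=\tfrac12|x-y|^2$. Then $h:=2\cdot 1_{[-\frac12,0]^2\cup[0,\frac12]^2}$ belongs to $\Gamma(f,g)^{\overline h}$ and minimizes $I_c$ over $\Gamma(f,g)^{\overline h}$. Moreover, with $u(x)=-\tfrac12x^2$, $v(y)=-\tfrac12y^2$, $S=\{(x,y):xy\ge0\}$ and $w=(c+u+v)1_S$ (so $w(x,y)=-xy\,1_{\{xy\ge0\}}$), the triple $(u,v,w)$ satisfies $c+u+v-w\ge0$, $w\le0$, and $\int c\,h=-\int uf-\int vg+\int w\,\overline h$.
   Context: $\Gamma(f,g)^{\overline h}$: nonnegative compactly supported integrable densities $h$ on $\mathbb{R}^2$ with marginals $\int h(x,y)dy=f(x)$, $\int h(x,y)dx=g(y)$ a.e. and $h\le\overline h$ a.e.; $I_c(h):=\int c\,h$. *)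

From HB Require Import structures.
From mathcomp Require Import all_boot all_order all_algebra.
From mathcomp Require Import all_classical all_reals all_analysis.
Set Implicit Arguments. Unset Strict Implicit. Unset Printing Implicit Defensive.
Import Order.TTheory GRing.Theory Num.Theory.
Import numFieldNormedType.Exports.
Local Open Scope classical_set_scope.
Local Open Scope ring_scope.

Section Defs.
Variable R : realType.

Definition leb := (@lebesgue_measure R).
Definition leb2 := (leb \x leb)%E.

Definition Gamma (f g : R -> R) (hbar : R * R -> R) (h : R * R -> R) : Prop :=
  [/\ (forall z, 0 <= h z),
      (exists K : set (R * R), compact K /\ forall z, ~ K z -> h z = 0),
      leb2.-integrable setT (EFin \o h),
      ({ae leb, forall x, (\int[leb]_y (h (x, y))%:E = (f x)%:E)%E}) &
      ({ae leb, forall y, (\int[leb]_x (h (x, y))%:E = (g y)%:E)%E}) /\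
      ({ae leb2, forall z, h z <= hbar z})].

Definition Ic (c : R * R -> R) (h : R * R -> R) : \bar R :=
  (\int[leb2]_z (c z * h z)%:E)%E.

Definition I : set R := [set x | -(1/2) <= x <= 1/2].
Definition f0 : R -> R := \1_I.
Definition g0 : R -> R := \1_I.
Definition hbar0 : R * R -> R := fun z => 2 * \1_(I `*` I) z.
Definition cost (z : R * R) : R := 1/2 * (z.1 - z.2) ^+ 2.
Definition h0 : R * R -> R := fun z =>
  2 * \1_(([set x : R | -(1/2) <= x <= 0] `*` [set x : R | -(1/2) <= x <= 0])
          `|` ([set x : R | 0 <= x <= 1/2] `*` [set x : R | 0 <= x <= 1/2])) z.
Definition u0 (x : R) : R := - (1/2) * x ^+ 2.
Definition v0 (y : R) : R := - (1/2) * y ^+ 2.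
Definition S0 : set (R * R) := [set z | 0 <= z.1 * z.2].
Definition w0 (z : R * R) : R := (cost z + u0 z.1 + v0 z.2) * \1_S0 z.

End Defs.

From mathcomp Require Import all_boot all_order all_algebra.
From mathcomp Require Import all_classical all_reals all_analysis.
From mathcomp Require Import measurable_realfun ring lra.
Set Implicit Arguments. Unset Strict Implicit. Unset Printing Implicit Defensive.
Import Order.TTheory GRing.Theory Num.Theory.
Local Open Scope classical_set_scope.
Local Open Scope ring_scope.

(** The triple [(u0, v0, w0)] is a dual certificate. For every admissible
    [h], Fubini's theorem and the two marginal constraints give
      [\int c h + \int (-w) h = \int (c + u + v - w) h - \int u f - \int v g],
    where the first integral on the right is nonnegative, while
    [\int (-w) h <= \int (-w) hbar] because [-w >= 0] and [h <= hbar] a.e.;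
    hence [I_c(h) >= - \int u f - \int v g + \int w hbar]. For [h0] both
    inequalities are equalities: [c + u + v = w] on [S], which contains the
    support of [h0], and [h0 = hbar] on [I^2 /\ S], outside of which
    [w hbar = w h0 = 0]. *)

Section integral_marginal.
Context d1 d2 (T1 : measurableType d1) (T2 : measurableType d2) (R : realType).
Variables (m1 : {sigma_finite_measure set T1 -> \bar R})
          (m2 : {sigma_finite_measure set T2 -> \bar R}).
Variable h : T1 * T2 -> R.
Hypotheses (mh : measurable_fun setT h) (h_ge0 : forall z, 0 <= h z).

Lemma integral_marginal_fst (f phi : T1 -> R) :
  measurable_fun setT f -> measurable_fun setT phi -> (forall x, 0 <= phi x) ->
  {ae m1, forall x, (\int[m2]_y (h (x, y))%:E = (f x)%:E)%E} ->
  (\int[m1 \x m2]_z (phi z.1 * h z)%:E = \int[m1]_x (phi x * f x)%:E)%E.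
Proof.
move=> mf mphi phi_ge0 hf.
have mphih : measurable_fun setT (fun z : T1 * T2 => (phi z.1 * h z)%:E).
  by apply/measurable_EFinP; apply: measurable_funM => //; exact: measurableT_comp.
have phih_ge0 z : (0 <= (phi z.1 * h z)%:E)%E by rewrite lee_fin mulr_ge0.
rewrite (fubini_tonelli1 _ mphih phih_ge0).
apply: ae_eq_integral => //.
- exact: measurable_fun_fubini_tonelli_F mphih phih_ge0.
- by apply/measurable_EFinP; exact: measurable_funM.
apply: filterS hf => x hfx _; rewrite /fubini_F /=.
under eq_integral do rewrite EFinM.
rewrite ge0_integralZl_EFin ?hfx ?EFinM // => [y _|].
- by rewrite lee_fin.
- exact/measurable_EFinP/measurableT_comp.
Qed.

Lemma integral_marginal_snd (g psi : T2 -> R) :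
  measurable_fun setT g -> measurable_fun setT psi -> (forall y, 0 <= psi y) ->
  {ae m2, forall y, (\int[m1]_x (h (x, y))%:E = (g y)%:E)%E} ->
  (\int[m1 \x m2]_z (psi z.2 * h z)%:E = \int[m2]_y (psi y * g y)%:E)%E.
Proof.
move=> mg mpsi psi_ge0 hg.
have mpsih : measurable_fun setT (fun z : T1 * T2 => (psi z.2 * h z)%:E).
  by apply/measurable_EFinP; apply: measurable_funM => //; exact: measurableT_comp.
have psih_ge0 z : (0 <= (psi z.2 * h z)%:E)%E by rewrite lee_fin mulr_ge0.
rewrite (fubini_tonelli2 _ mpsih psih_ge0).
apply: ae_eq_integral => //.
- exact: measurable_fun_fubini_tonelli_G mpsih psih_ge0.
- by apply/measurable_EFinP; exact: measurable_funM.
apply: filterS hg => y hgy _; rewrite /fubini_G /=.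
under eq_integral do rewrite EFinM.
rewrite ge0_integralZl_EFin ?hgy ?EFinM // => [x _|].
- by rewrite lee_fin.
- exact/measurable_EFinP/measurableT_comp.
Qed.

End integral_marginal.

Lemma ge0_integral_mulDl d (T : measurableType d) (R : realType)
    (mu : {measure set T -> \bar R}) (a b h : T -> R) :
  measurable_fun setT a -> measurable_fun setT b -> measurable_fun setT h ->
  (forall x, 0 <= a x) -> (forall x, 0 <= b x) -> (forall x, 0 <= h x) ->
  (\int[mu]_x ((a x + b x) * h x)%:E =
   \int[mu]_x (a x * h x)%:E + \int[mu]_x (b x * h x)%:E)%E.
Proof.
move=> ma mb mh a_ge0 b_ge0 h_ge0.
under eq_integral do rewrite mulrDl EFinD.
apply: ge0_integralD => //.
- by move=> x _; rewrite lee_fin mulr_ge0.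
- exact/measurable_EFinP/measurable_funM.
- by move=> x _; rewrite lee_fin mulr_ge0.
- exact/measurable_EFinP/measurable_funM.
Qed.

Lemma le0_integral_mulEFin d (T : measurableType d) (R : realType)
    (mu : {measure set T -> \bar R}) (a b : T -> R) :
  (forall x, a x <= 0) -> (forall x, 0 <= b x) ->
  (\int[mu]_x (a x * b x)%:E = - \int[mu]_x (- a x * b x)%:E)%E.
Proof.
move=> a_le0 b_ge0; rewrite -integral_ge0N => [|x _]; last first.
  by rewrite lee_fin mulr_ge0 // oppr_ge0.
by apply: eq_integral => x _; rewrite mulNr EFinN oppeK.
Qed.

(* [Gamma] for arbitrary sigma-finite marginal measures, without the
   compact-support and integrability conditions, which the duality argument
   does not use. *)
Definition admissible d1 d2 (T1 : measurableType d1) (T2 : measurableType d2)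
    (R : realType) (m1 : {sigma_finite_measure set T1 -> \bar R})
    (m2 : {sigma_finite_measure set T2 -> \bar R})
    (f : T1 -> R) (g : T2 -> R) (hbar h : T1 * T2 -> R) :=
  [/\ forall z, 0 <= h z, measurable_fun setT h,
      {ae m1, forall x, (\int[m2]_y (h (x, y))%:E = (f x)%:E)%E},
      {ae m2, forall y, (\int[m1]_x (h (x, y))%:E = (g y)%:E)%E} &
      {ae (m1 \x m2)%E, forall z, h z <= hbar z}].

Lemma Gamma_admissible (R : realType) (f g : R -> R) (hbar h : R * R -> R) :
  Gamma f g hbar h -> admissible (@leb R) (@leb R) f g hbar h.
Proof. by case=> h_ge0 _ /integrableP[/measurable_EFinP mh _] hf [hg h_le]. Qed.

Section density_constrained_duality.
Context d1 d2 (T1 : measurableType d1) (T2 : measurableType d2) (R : realType).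
Variables (m1 : {sigma_finite_measure set T1 -> \bar R})
          (m2 : {sigma_finite_measure set T2 -> \bar R}).
Variables (f u : T1 -> R) (g v : T2 -> R) (c w hbar : T1 * T2 -> R).
Hypotheses (mf : measurable_fun setT f) (mg : measurable_fun setT g)
  (mu : measurable_fun setT u) (mv : measurable_fun setT v)
  (mc : measurable_fun setT c) (mw : measurable_fun setT w)
  (mhbar : measurable_fun setT hbar).
Hypotheses (f_ge0 : forall x, 0 <= f x) (g_ge0 : forall y, 0 <= g y)
  (c_ge0 : forall z, 0 <= c z) (hbar_ge0 : forall z, 0 <= hbar z)
  (u_le0 : forall x, u x <= 0) (v_le0 : forall y, v y <= 0)
  (w_le0 : forall z, w z <= 0).

Let slack z := c z + u z.1 + v z.2 - w z.
Hypothesis slack_ge0 : forall z, 0 <= slack z.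

Local Notation admissible := (admissible m1 m2 f g hbar).

Let cost_integral h := (\int[m1 \x m2]_z (c z * h z)%:E)%E.
Let dual_value := (\int[m1]_x (- u x * f x)%:E + \int[m2]_y (- v y * g y)%:E)%E.

Let mslack : measurable_fun setT slack.
Proof.
apply: measurable_funB => //; apply: measurable_funD; first apply: measurable_funD => //.
- exact: measurableT_comp mu measurable_fst.
- exact: measurableT_comp mv measurable_snd.
Qed.

Lemma cost_integral_add_negw (h : T1 * T2 -> R) :
  (forall z, 0 <= h z) -> measurable_fun setT h ->
  {ae m1, forall x, (\int[m2]_y (h (x, y))%:E = (f x)%:E)%E} ->
  {ae m2, forall y, (\int[m1]_x (h (x, y))%:E = (g y)%:E)%E} ->
  (cost_integral h + \int[m1 \x m2]_z (- w z * h z)%:E =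
   \int[m1 \x m2]_z (slack z * h z)%:E + dual_value)%E.
Proof.
move=> h_ge0 mh hf hg.
have mnw : measurable_fun setT (fun z => - w z) by exact: measurable_funN.
have mnu : measurable_fun setT (fun z : T1 * T2 => - u z.1).
  by apply: measurable_funN; exact: measurableT_comp mu measurable_fst.
have mnv : measurable_fun setT (fun z : T1 * T2 => - v z.2).
  by apply: measurable_funN; exact: measurableT_comp mv measurable_snd.
have nu_ge0 x : 0 <= - u x by rewrite oppr_ge0.
have nv_ge0 y : 0 <= - v y by rewrite oppr_ge0.
rewrite /dual_value -(integral_marginal_fst mh h_ge0 mf _ nu_ge0 hf); last first.
  exact: measurable_funN.
rewrite -(integral_marginal_snd mh h_ge0 mg _ nv_ge0 hg); last first.
  exact: measurable_funN.
rewrite /cost_integral -ge0_integral_mulDl // => [|z]; last by rewrite oppr_ge0.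
rewrite -ge0_integral_mulDl // -ge0_integral_mulDl //; last first.
- by move=> z; rewrite addr_ge0.
- exact: measurable_funD.
by apply: eq_integral => z _; rewrite /slack; congr (EFin (_ * _)); ring.
Qed.

Lemma dual_value_le h : admissible h ->
  (dual_value <= cost_integral h + \int[m1 \x m2]_z (- w z * hbar z)%:E)%E.
Proof.
move=> [h_ge0 mh hf hg h_le].
have nw_ge0 z : 0 <= - w z by rewrite oppr_ge0.
have mnw : measurable_fun setT (fun z => - w z) by exact: measurable_funN.
apply: (@le_trans _ _ (cost_integral h + \int[m1 \x m2]_z (- w z * h z)%:E)%E).
  rewrite cost_integral_add_negw // leeDr //.
  by apply: integral_ge0 => z _; rewrite lee_fin mulr_ge0.
apply: leeD2l; apply: ae_ge0_le_integral => //.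
- by move=> z _; rewrite lee_fin mulr_ge0.
- exact/measurable_EFinP/measurable_funM.
- by move=> z _; rewrite lee_fin mulr_ge0.
- exact/measurable_EFinP/measurable_funM.
by apply: filterS h_le => z hz _; rewrite lee_fin ler_wpM2l.
Qed.

Lemma cost_integral_add_negw_eq_dual (h : T1 * T2 -> R) :
  (forall z, 0 <= h z) -> measurable_fun setT h ->
  {ae m1, forall x, (\int[m2]_y (h (x, y))%:E = (f x)%:E)%E} ->
  {ae m2, forall y, (\int[m1]_x (h (x, y))%:E = (g y)%:E)%E} ->
  (forall z, slack z * h z = 0) -> (forall z, w z * h z = w z * hbar z) ->
  (cost_integral h + \int[m1 \x m2]_z (- w z * hbar z)%:E = dual_value)%E.
Proof.
move=> h_ge0 mh hf hg slack_h w_h.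
have -> : (\int[m1 \x m2]_z (- w z * hbar z)%:E = \int[m1 \x m2]_z (- w z * h z)%:E)%E.
  by apply: eq_integral => z _; rewrite !mulNr w_h.
rewrite cost_integral_add_negw //.
by under eq_integral do rewrite slack_h; rewrite integral0 add0e.
Qed.

Theorem complementary_slackness_optimal hopt :
  admissible hopt -> (forall z, slack z * hopt z = 0) ->
  (forall z, w z * hopt z = w z * hbar z) ->
  (\int[m1 \x m2]_z (- w z * hbar z)%:E)%E \is a fin_num ->
  (forall h, admissible h -> cost_integral hopt <= cost_integral h)%E /\
  cost_integral hopt = (- (\int[m1]_x (u x * f x)%:E) - (\int[m2]_y (v y * g y)%:E)
                        + (\int[m1 \x m2]_z (w z * hbar z)%:E))%E.
Proof.
move=> [hopt_ge0 mhopt hf hg _] slack_hopt w_hopt negw_fin.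
have opt_eq := cost_integral_add_negw_eq_dual hopt_ge0 mhopt hf hg slack_hopt w_hopt.
split => [h adm_h|].
  by rewrite -(leeD2rE _ _ negw_fin) opt_eq dual_value_le.
rewrite (le0_integral_mulEFin _ u_le0 f_ge0) (le0_integral_mulEFin _ v_le0 g_ge0).
rewrite (le0_integral_mulEFin _ w_le0 hbar_ge0) !oppeK.
by move: opt_eq; rewrite /dual_value => <-; rewrite addeK.
Qed.

End density_constrained_duality.

Lemma indic_in (T : Type) (R : realType) (A : set T) x : A x -> \1_A x = 1 :> R.
Proof. by move=> Ax; rewrite indicE mem_set. Qed.

Lemma indic_notin (T : Type) (R : realType) (A : set T) x : ~ A x -> \1_A x = 0 :> R.
Proof. by move=> nAx; rewrite indicE memNset. Qed.

Lemma set_itv_cc (R : realType) (a b : R) : `[a, b]%classic = [set x | a <= x <= b].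
Proof. by apply/seteqP; split => x /=; rewrite in_itv. Qed.

Lemma lebesgue_measure_cc (R : realType) (a b : R) : a <= b ->
  lebesgue_measure [set x : R | a <= x <= b] = (b - a)%:E.
Proof.
move=> ab; rewrite -set_itv_cc lebesgue_measure_itv /= lte_fin.
case: ltP => [_|ba]; first by rewrite EFinB.
suff -> : a = b by rewrite subrr.
by apply/le_anti/andP.
Qed.

Lemma ae_lebesgue_neq (R : realType) (a : R) (P : R -> Prop) :
  (forall x, x != a -> P x) -> {ae lebesgue_measure, forall x, P x}.
Proof.
move=> HP; exists [set a]; split; [exact: measurable_set1|exact: lebesgue_measure_set1|].
by move=> x /= nPx; apply: contrapT => xa; apply/nPx/HP/eqP.
Qed.

Section example.
Variable R : realType.

Let lower_half : set R := [set x | -(1/2) <= x <= 0].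
Let upper_half : set R := [set x | 0 <= x <= 1/2].
Let squares : set (R * R) :=
  lower_half `*` lower_half `|` upper_half `*` upper_half.

Let h0E (z : R * R) : h0 z = 2 * \1_squares z.
Proof. by []. Qed.

Let mI : measurable (@I R).
Proof. by rewrite /I -set_itv_cc; exact: measurable_itv. Qed.

Let mlower : measurable lower_half.
Proof. by rewrite /lower_half -set_itv_cc; exact: measurable_itv. Qed.

Let mupper : measurable upper_half.
Proof. by rewrite /upper_half -set_itv_cc; exact: measurable_itv. Qed.

Let msquares : measurable squares.
Proof. by apply: measurableU; apply: measurableX. Qed.

Let squares_sub_II : squares `<=` @I R `*` @I R.
Proof.
move=> [x y]; rewrite /squares /lower_half /upper_half /I /=.
by case=> -[/andP[? ?] /andP[? ?]]; split; apply/andP; split; lra.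
Qed.

Let squares_sub_S0 : squares `<=` @S0 R.
Proof.
move=> [x y]; rewrite /squares /lower_half /upper_half /S0 /=.
by case=> -[/andP[? ?] /andP[? ?]]; nra.
Qed.

Let II_S0_sub_squares : @I R `*` @I R `&` @S0 R `<=` squares.
Proof.
move=> [x y]; rewrite /squares /lower_half /upper_half /I /S0 /=.
move=> [[/andP[? ?] /andP[? ?]] xy_ge0].
have [x_ge0|x_lt0] := leP 0 x; have [y_ge0|y_lt0] := leP 0 y.
- by right; split; apply/andP.
all: by left; split; apply/andP; split; nra.
Qed.

Lemma cost_add_u0_v0 (z : R * R) : cost z + u0 z.1 + v0 z.2 = - (z.1 * z.2).
Proof. by rewrite /cost /u0 /v0; field. Qed.

Lemma w0E (z : R * R) : w0 z = - (z.1 * z.2) * \1_(@S0 R) z.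
Proof. by rewrite /w0 cost_add_u0_v0. Qed.

Lemma w0_le0 (z : R * R) : w0 z <= 0.
Proof.
rewrite w0E; have [Sz|nSz] := pselect (S0 z); last by rewrite indic_notin ?mulr0.
by rewrite indic_in // mulr1 oppr_le0.
Qed.

Lemma slack0_ge0 (z : R * R) : 0 <= cost z + u0 z.1 + v0 z.2 - w0 z.
Proof.
rewrite w0E cost_add_u0_v0; have [Sz|nSz] := pselect (S0 z).
  by rewrite indic_in // mulr1 subrr.
rewrite indic_notin // mulr0 subr0 oppr_ge0; apply: ltW.
by rewrite ltNge; apply/negP.
Qed.

Lemma slack0_h0 (z : R * R) : (cost z + u0 z.1 + v0 z.2 - w0 z) * h0 z = 0.
Proof.
rewrite h0E; have [sq|nsq] := pselect (squares z); last by rewrite indic_notin // !mulr0.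
by rewrite w0E cost_add_u0_v0 indic_in ?mulr1 ?subrr ?mul0r //; exact: squares_sub_S0.
Qed.

Lemma w0_h0 (z : R * R) : w0 z * h0 z = w0 z * hbar0 z.
Proof.
rewrite h0E /hbar0; have [sq|nsq] := pselect (squares z).
  by rewrite !indic_in //; exact: squares_sub_II.
have [Sz|nSz] := pselect (S0 z); last by rewrite w0E [\1_(@S0 R) z]indic_notin // mulr0 !mul0r.
rewrite [\1_squares z]indic_notin // [\1_(@I R `*` @I R) z]indic_notin ?mulr0 // => IIz.
exact/nsq/II_S0_sub_squares.
Qed.

Lemma h0_le_hbar0 (z : R * R) : h0 z <= hbar0 z.
Proof.
rewrite h0E /hbar0; have [sq|nsq] := pselect (squares z).
  by rewrite !indic_in //; exact: squares_sub_II.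
by rewrite indic_notin // mulr0 mulr_ge0.
Qed.

Lemma h0_ge0 (z : R * R) : 0 <= h0 z.
Proof. by rewrite h0E mulr_ge0. Qed.

Lemma hbar0_ge0 (z : R * R) : 0 <= hbar0 z.
Proof. by rewrite /hbar0 mulr_ge0. Qed.

Lemma cost_ge0 (z : R * R) : 0 <= cost z.
Proof. by rewrite /cost mulr_ge0 // sqr_ge0. Qed.

Lemma u0_le0 (x : R) : u0 x <= 0.
Proof. by rewrite /u0 mulNr oppr_le0 mulr_ge0 // sqr_ge0. Qed.

Lemma f0_ge0 (x : R) : 0 <= f0 x.
Proof. by []. Qed.

Lemma measurable_f0 : measurable_fun setT (@f0 R).
Proof. exact: measurable_indic mI. Qed.

Lemma measurable_u0 : measurable_fun setT (@u0 R).
Proof. by apply: measurable_funM => //; exact: measurable_funX. Qed.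

Lemma measurable_cost : measurable_fun setT (@cost R).
Proof.
apply: measurable_funM => //; apply: measurable_funX.
by apply: measurable_funB; [exact: measurable_fst|exact: measurable_snd].
Qed.

Lemma measurable_S0 : measurable (@S0 R).
Proof.
have mxy : measurable_fun setT (fun z : R * R => z.1 * z.2).
  by apply: measurable_funM; [exact: measurable_fst|exact: measurable_snd].
have := mxy measurableT _ (measurable_itv `[0, +oo[); rewrite setTI.
by congr measurable; apply/seteqP; split => z /=; rewrite in_itv /= andbT.
Qed.

Lemma measurable_w0 : measurable_fun setT (@w0 R).
Proof.
apply: measurable_funM; last exact: measurable_indic measurable_S0.
apply: measurable_funD; first apply: measurable_funD.
- exact: measurable_cost.
- exact: measurableT_comp measurable_u0 measurable_fst.
- exact: measurableT_comp measurable_u0 measurable_snd.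
Qed.

Lemma measurable_hbar0 : measurable_fun setT (@hbar0 R).
Proof. by apply: measurable_funM => //; exact: measurable_indic (measurableX mI mI). Qed.

Lemma measurable_h0 : measurable_fun setT (@h0 R).
Proof. by apply: measurable_funM => //; exact: measurable_indic msquares. Qed.

Let lebesgue_measure_I : lebesgue_measure (@I R) = 1%:E.
Proof. by rewrite lebesgue_measure_cc; [congr EFin|]; lra. Qed.

Lemma integral_hbar0 : (\int[@leb2 R]_z (hbar0 z)%:E = 2%:E)%E.
Proof.
under eq_integral do rewrite /hbar0 EFinM.
rewrite ge0_integralZl_EFin //; last first.
  by apply/measurable_EFinP; exact: measurable_indic (measurableX mI mI).
rewrite integral_indic //; last exact: measurableX mI mI.
rewrite setIT.
have leb2_II : @leb2 R (@I R `*` @I R) = 1%E.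
  apply: eq_trans (product_measure1E (@leb R) (@leb R) mI mI) _.
  by rewrite -[RHS]mule1; congr (_ * _)%E; exact: lebesgue_measure_I.
by rewrite -[RHS]mule1; congr (_ * _)%E; exact: leb2_II.
Qed.

Lemma integral_negw0_hbar0_fin :
  (\int[@leb2 R]_z (- w0 z * hbar0 z)%:E)%E \is a fin_num.
Proof.
have negw0_le (z : R * R) : - w0 z * hbar0 z <= 1/4 * hbar0 z.
  rewrite /hbar0; have [IIz|nIIz] := pselect ((@I R `*` @I R) z); last first.
    by rewrite indic_notin // !mulr0.
  rewrite indic_in // mulr1 ler_wpM2r // w0E.
  have [Sz|nSz] := pselect (S0 z); last by rewrite indic_notin // mulr0 oppr0.
  rewrite indic_in // mulr1 opprK; case: z IIz {Sz} => x y /=.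
  by case=> /andP[? ?] /andP[? ?]; nra.
have integrand_ge0 (z : R * R) : (0 <= (- w0 z * hbar0 z)%:E)%E.
  by rewrite lee_fin mulr_ge0 ?hbar0_ge0 // oppr_ge0 w0_le0.
rewrite ge0_fin_numE; last by apply: integral_ge0 => z _.
apply: (@le_lt_trans _ _ (\int[@leb2 R]_z (1/4 * hbar0 z)%:E)%E).
  apply: ge0_le_integral => //.
  - apply/measurable_EFinP/measurable_funM; last exact: measurable_hbar0.
    by apply: measurable_funN; exact: measurable_w0.
  - by apply/measurable_EFinP/measurable_funM => //; exact: measurable_hbar0.
  - by move=> z _; rewrite lee_fin.
under eq_integral do rewrite EFinM.
rewrite ge0_integralZl_EFin //.
- by rewrite integral_hbar0 -EFinM ltry.
- by move=> z _; rewrite lee_fin hbar0_ge0.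
- by apply/measurable_EFinP; exact: measurable_hbar0.
Qed.

Let h0_lower (x y : R) : -(1/2) <= x -> x < 0 -> h0 (x, y) = 2 * \1_lower_half y.
Proof.
move=> x_ge x_lt0; rewrite h0E; congr (_ * _).
have [ly|nly] := pselect (lower_half y).
  by rewrite !indic_in //; left; split => //=; rewrite /lower_half /=; apply/andP; split; lra.
by rewrite !indic_notin // => -[[_ //]|[/= /andP[? ?] _]]; lra.
Qed.

Let h0_upper (x y : R) : 0 < x -> x <= 1/2 -> h0 (x, y) = 2 * \1_upper_half y.
Proof.
move=> x_gt0 x_le; rewrite h0E; congr (_ * _).
have [uy|nuy] := pselect (upper_half y).
  by rewrite !indic_in //; right; split => //=; rewrite /upper_half /=; apply/andP; split; lra.
by rewrite !indic_notin // => -[[/= /andP[? ?] _]|[_ //]]; lra.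
Qed.

Let h0_notI (x y : R) : ~ @I R x -> h0 (x, y) = 0.
Proof. by move=> nIx; rewrite h0E indic_notin ?mulr0 // => /squares_sub_II[]. Qed.

Let integral_twice_indic (A : set R) : measurable A ->
  lebesgue_measure A = (1/2)%:E -> (\int[@leb R]_y (2 * \1_A y)%:E = 1%:E)%E.
Proof.
move=> mA A_half; under eq_integral do rewrite EFinM.
rewrite ge0_integralZl_EFin //; last by apply/measurable_EFinP; exact: measurable_indic.
rewrite integral_indic // setIT.
transitivity (2%:E * (1/2 : R)%:E)%E; first by congr (_ * _)%E; exact: A_half.
by rewrite -EFinM; congr EFin; field.
Qed.

Lemma integral_h0_fst (x : R) : x != 0 -> (\int[@leb R]_y (h0 (x, y))%:E = (f0 x)%:E)%E.
Proof.
move=> x_neq0; rewrite /f0.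
have [Ix|nIx] := pselect (@I R x); last first.
  by rewrite indic_notin //; under eq_integral do rewrite h0_notI //; rewrite integral0.
rewrite indic_in //; move: Ix; rewrite /I /= => /andP[x_ge x_le].
have [x_lt0|x_ge0] := ltP x 0.
  under eq_integral do rewrite h0_lower //.
  by apply: integral_twice_indic mlower _; rewrite lebesgue_measure_cc; [congr EFin|]; lra.
have x_gt0 : 0 < x by rewrite lt_neqAle eq_sym x_neq0.
under eq_integral do rewrite h0_upper //.
by apply: integral_twice_indic mupper _; rewrite lebesgue_measure_cc; [congr EFin|]; lra.
Qed.

Let h0C (x y : R) : h0 (x, y) = h0 (y, x).
Proof.
rewrite !h0E; congr (_ * _).
have [sq|nsq] := pselect (squares (x, y)).
  by rewrite !indic_in //; case: sq => -[? ?]; [left|right]; split.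
by rewrite !indic_notin // => -[[? ?]|[? ?]]; apply: nsq; [left|right]; split.
Qed.

Lemma integral_h0_snd (y : R) : y != 0 -> (\int[@leb R]_x (h0 (x, y))%:E = (g0 y)%:E)%E.
Proof. by move=> y_neq0; under eq_integral do rewrite h0C; exact: integral_h0_fst. Qed.

Lemma Gamma_h0 : Gamma (@f0 R) (@g0 R) (@hbar0 R) (@h0 R).
Proof.
split.
- exact: h0_ge0.
- exists (@I R `*` @I R); split.
    by rewrite /I -set_itv_cc; apply: compact_setX; exact: segment_compact.
  by move=> z nIIz; rewrite h0E indic_notin ?mulr0 // => /squares_sub_II.
- apply/integrableP; split; first by apply/measurable_EFinP; exact: measurable_h0.
  have abs_h0 (z : R * R) : `|(EFin \o @h0 R) z|%E = (h0 z)%:E.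
    by apply: eq_trans (abse_EFin _) _; rewrite ger0_norm ?h0_ge0.
  under eq_integral do rewrite abs_h0.
  apply: (@le_lt_trans _ _ (\int[@leb2 R]_z (hbar0 z)%:E)%E).
    apply: ge0_le_integral => //.
    + by move=> z _; rewrite lee_fin h0_ge0.
    + by apply/measurable_EFinP; exact: measurable_h0.
    + by apply/measurable_EFinP; exact: measurable_hbar0.
    + by move=> z _; rewrite lee_fin h0_le_hbar0.
  by rewrite integral_hbar0 ltry.
- by apply: (ae_lebesgue_neq (a := 0)) => x; exact: integral_h0_fst.
split; first by apply: (ae_lebesgue_neq (a := 0)) => y; exact: integral_h0_snd.
by apply: aeW => z; exact: h0_le_hbar0.
Qed.

End example.

Theorem mainTheorem13 (R : realType) :
  [/\ Gamma (@f0 R) (@g0 R) (@hbar0 R) (@h0 R),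
      (forall h, Gamma (@f0 R) (@g0 R) (@hbar0 R) h ->
         (Ic (@cost R) (@h0 R) <= Ic (@cost R) h)%E),
      (forall z : R * R, 0 <= cost z + u0 z.1 + v0 z.2 - w0 z),
      (forall z : R * R, w0 z <= 0) &
      Ic (@cost R) (@h0 R) =
        (- (\int[@leb R]_x (u0 x * f0 x)%:E)
         - (\int[@leb R]_y (v0 y * g0 y)%:E)
         + (\int[@leb2 R]_z (w0 z * hbar0 z)%:E))%E].
Proof.
(* [g0] and [v0] are convertible to [f0] and [u0]. *)
have [h0_min h0_value] := complementary_slackness_optimal
  (m1 := @leb R) (m2 := @leb R) (g := @g0 R) (v := @v0 R) (@measurable_f0 R) (@measurable_f0 R)
  (@measurable_u0 R) (@measurable_u0 R) (@measurable_cost R) (@measurable_w0 R)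
  (@measurable_hbar0 R) (@f0_ge0 R) (@f0_ge0 R) (@cost_ge0 R) (@hbar0_ge0 R)
  (@u0_le0 R) (@u0_le0 R) (@w0_le0 R) (@slack0_ge0 R)
  (Gamma_admissible (@Gamma_h0 R)) (@slack0_h0 R) (@w0_h0 R)
  (@integral_negw0_hbar0_fin R).
split; [exact: Gamma_h0| |exact: slack0_ge0|exact: w0_le0|exact: h0_value].
by move=> h /Gamma_admissible; exact: h0_min.
Qed.
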